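(* For every prime power $q$, all integers $n$, $r\le\lfloor n/2\rfloor$ and $0<\rho<r$, $$K_{\mathrm{C}}(q,n,r,\rho)\le K_{\mathrm{C}}(q,n-1,r,\rho-1)\le {n-\rho\brack r} \quad\text{and}\quad K_{\mathrm{C}}(q,n,r,\rho)\le K_{\mathrm{C}}(q,n,r-1,\rho-1)\le {n\brack r-\rho}.$$
   Context: ${m\brack k}=\prod_{i=0}^{k-1}\frac{q^m-q^i}{q^k-q^i}$ is the Gaussian binomial (the number of $k$-dimensional subspaces of $\mathrm{GF}(q)^m$). $E_r(q,n)$ is the set of $r$-dimensional subspaces of $\mathrm{GF}(q)^n$ with injection distance $d_{\mathrm{I}}(U,V)=\dim(U+V)-\min\{\dim U,\dim V\}$; the covering radius of a nonempty $\mathcal{C}\subseteq E_r(q,n)$ is $\max_U\min_{C\in\mathcal{C}}d_{\mathrm{I}}(U,C)$, and $K_{\mathrm{C}}(q,n,r,\rho)$ is the minimum cardinality of a subset of $E_r(q,n)$ with covering radius at most $\rho$ (for any $0\le r\le n$, $\rho\ge 0$). *)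

From mathcomp Require Import all_boot all_order all_algebra.
Set Implicit Arguments. Unset Strict Implicit. Unset Printing Implicit Defensive.
Import Order.TTheory GRing.Theory Num.Theory.

Section Grass.
Variable F : finFieldType.

(* the canonical representatives of subspaces of F^n: matrices equal to their
   own generated row space <<A>>; the row space of A is the subspace. *)
Definition is_subspace (n : nat) (A : 'M[F]_n) : bool := (<<A>>%MS == A).

Definition Egr (n r : nat) : {set 'M[F]_n} :=
  [set A : 'M[F]_n | is_subspace A && (\rank A == r)].

Definition dinj (n : nat) (U V : 'M[F]_n) : nat :=
  (\rank (U + V)%MS - minn (\rank U) (\rank V))%N.

Definition covers (n r rho : nat) (C : {set 'M[F]_n}) : bool :=
  [&& C \subset Egr n r, C != set0 &
      [forall U in Egr n r, exists c in C, dinj U c <= rho]].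

(* K_C(q,n,r,rho), q = #|F|: minimum cardinality of such a code.
   (The default value #|Egr n r| is attained by Egr n r itself whenever
   Egr n r is nonempty, so it never affects the minimum in that case.) *)
Definition KC (n r rho : nat) : nat :=
  \big[minn/#|Egr n r|]_(C : {set 'M[F]_n} | covers r rho C) #|C|.

End Grass.

Definition gauss_binom (q m k : nat) : rat :=
  (\prod_(i < k) (((q ^ m)%:R - (q ^ i)%:R) / ((q ^ k)%:R - (q ^ i)%:R)))%R.

(* Two monotonicity steps drive both chains.  Embed F^(n-1) in F^n as a
   hyperplane H: an r-space U of F^n meets H in dimension at least r - 1, so
   U is at injection distance at most 1 from the image of some r-space of
   F^(n-1), and the image of a covering code of radius rho - 1 has radius at
   most rho.  Likewise enlarge every codeword of an (r-1)-dimensional code to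
   an r-space: as every r-space contains an (r-1)-space, the radius again
   grows by at most one.  Iterating each step rho - 1 times ends at radius 0,
   where the whole Grassmannian is a covering code.  Its size is bounded by
   the Gaussian binomial because (U, g) |-> g * (a basis of U) injects
   E_k(q,m) x GL_k(q) into the full-rank k x m matrices. *)

From mathcomp Require Import all_boot all_order all_algebra.
From mathcomp Require Import zify.
Set Implicit Arguments. Unset Strict Implicit. Unset Printing Implicit Defensive.
Import Order.TTheory GRing.Theory Num.Theory.

Section RankGeometry.
Variable F : finFieldType.

Lemma mxrank_adds_triangle m1 m2 m3 n (X : 'M[F]_(m1, n)) (Y : 'M[F]_(m2, n))
    (Z : 'M[F]_(m3, n)) :
  \rank (X + Z)%MS + \rank Y <= \rank (X + Y)%MS + \rank (Y + Z)%MS.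
Proof.
rewrite -(mxrank_sum_cap (X + Y)%MS (Y + Z)%MS); apply: leq_add; apply: mxrankS.
  by rewrite addsmxS ?addsmxSl ?addsmxSr.
by rewrite sub_capmx addsmxSr addsmxSl.
Qed.

Lemma mxrank_adds_sub m1 m2 m3 n (X : 'M[F]_(m1, n)) (Y : 'M[F]_(m2, n))
    (Z : 'M[F]_(m3, n)) :
  (Y <= X)%MS -> \rank (X + Z)%MS + \rank Y <= \rank X + \rank (Y + Z)%MS.
Proof.
by move=> /addsmx_idPl YX; rewrite -[in \rank X]YX mxrank_adds_triangle.
Qed.

Lemma exists_submx_rank m n (A : 'M[F]_(m, n)) p : p <= \rank A ->
  exists2 X : 'M[F]_n, (X <= A)%MS & \rank X = p.
Proof.
move=> le_pA; have le_pn : p <= n := leq_trans le_pA (rank_leq_col A).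
exists (pid_mx p *m row_ebase A)%R; last first.
  by rewrite mxrankMfree ?row_free_unit ?row_ebase_unit // rank_pid_mx.
have -> : (pid_mx p = (pid_mx p : 'M[F]_(n, \rank A))
                       *m (pid_mx (\rank A) : 'M_(\rank A, n)) :> 'M_n)%R.
  by rewrite mul_pid_mx (minn_idPl le_pA) (minn_idPr le_pA).
by rewrite -mulmxA -/(row_base A) -(eq_row_base A) submxMl.
Qed.

Lemma exists_supmx_rank m n (A : 'M[F]_(m, n)) k : \rank A <= k <= n ->
  exists2 B : 'M[F]_n, (A <= B)%MS & \rank B = k.
Proof.
case/andP=> le_Ak le_kn.
have [|Y sYAc rY] := exists_submx_rank (A := A^C%MS) (p := k - \rank A).
  by rewrite mxrank_compl leq_sub2r.
exists (A + Y)%MS; first exact: addsmxSl.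
rewrite mxrank_disjoint_sum ?rY ?subnKC //.
by apply/eqP; rewrite -submx0 -(capmx_compl A) capmxS.
Qed.

Lemma Egr_rank n r (U : 'M[F]_n) : U \in Egr F n r -> \rank U = r.
Proof. by rewrite inE => /andP[_ /eqP]. Qed.

Lemma Egr_genmx m n r (A : 'M[F]_(m, n)) :
  (<<A>>%MS \in Egr F n r) = (\rank A == r).
Proof. by rewrite inE /is_subspace genmx_id eqxx mxrank_gen. Qed.

Lemma Egr_neq0 n r : r <= n -> Egr F n r != set0.
Proof.
move=> le_rn; apply/set0Pn; exists <<pid_mx r : 'M[F]_n>>%MS.
by rewrite Egr_genmx rank_pid_mx.
Qed.

Lemma dinj_leE n r s (U V : 'M[F]_n) : \rank U = r -> \rank V = r ->
  (dinj U V <= s) = (\rank (U + V)%MS <= r + s).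
Proof. by move=> rU rV; rewrite /dinj rU rV minnn leq_subLR. Qed.

Lemma dinjxx n (U : 'M[F]_n) : dinj U U = 0.
Proof. by rewrite /dinj (addsmx_idPl (submx_refl U)) minnn subnn. Qed.

Lemma dinj_triangle n r (U V W : 'M[F]_n) :
  \rank U = r -> \rank V = r -> \rank W = r ->
  dinj U W <= dinj U V + dinj V W.
Proof.
move=> rU rV rW; rewrite /dinj rU rV rW minnn.
have := mxrank_adds_triangle U V W; have := mxrankS (addsmxSl U V).
have := mxrankS (addsmxSl V W); rewrite rU rV; lia.
Qed.

Lemma exists_Egr_near_image m n r (E : 'M[F]_(m, n)) (U : 'M[F]_n) :
  row_free E -> \rank U = r -> r <= m ->
  exists2 V, V \in Egr F m r & dinj U <<(V *m E)%R>>%MS <= n - m.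
Proof.
move=> freeE rU le_rm; have rE : \rank E = m by apply/eqP.
pose I := (U :&: E)%MS; pose W := (I *m pinvmx E)%R.
have WE : (W *m E = I)%R by rewrite mulmxKpV ?capmxSl ?capmxSr.
have IU : (I <= U)%MS by rewrite capmxSl.
have rI : r + m <= \rank I + n.
  by rewrite -rU -rE -mxrank_sum_cap addnC leq_add2l rank_leq_col.
have [|B WB rB] := exists_supmx_rank (A := W) (k := r).
  by rewrite le_rm andbT -(mxrankMfree _ freeE) WE -rU mxrankS.
exists <<B>>%MS; first by rewrite Egr_genmx rB.
set VE := <<(<<B>> *m E)%R>>%MS.
have IVE : (I <= VE)%MS by rewrite genmxE -WE submxMr // genmxE.
have rVE : \rank VE = r by rewrite mxrank_gen mxrankMfree ?mxrank_gen.
rewrite (dinj_leE _ rU rVE).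
have := mxrank_adds_sub VE IU; rewrite rU (addsmx_idPr IVE) rVE; lia.
Qed.

Lemma dinj_genmx_mulmx m n (E : 'M[F]_(m, n)) (U V : 'M[F]_m) : row_free E ->
  dinj <<(U *m E)%R>>%MS <<(V *m E)%R>>%MS = dinj U V.
Proof.
move=> freeE; rewrite /dinj !mxrank_gen !mxrankMfree //.
by rewrite (adds_eqmx (genmxE _) (genmxE _)) -addsmxMr mxrankMfree.
Qed.

End RankGeometry.

Section CoveringNumber.
Variable F : finFieldType.

Lemma covers_Egr n r s : r <= n -> covers r s (Egr F n r).
Proof.
move=> le_rn; rewrite /covers subxx Egr_neq0 //=.
by apply/forall_inP => U EU; apply/exists_inP; exists U; rewrite ?dinjxx.
Qed.

Lemma KC_le_card n r s (C : {set 'M[F]_n}) : covers r s C -> KC F n r s <= #|C|.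
Proof.
move=> covC; rewrite /KC -minEnat.
by have := bigmin_le_cond #|Egr F n r| (fun C : {set 'M[F]_n} => #|C|) covC.
Qed.

Lemma KC_ge n r s N : r <= n ->
  (forall C : {set 'M[F]_n}, covers r s C -> N <= #|C|) -> N <= KC F n r s.
Proof.
move=> le_rn geN; apply: (big_ind (fun x => N <= x)); last exact: geN.
- exact/geN/covers_Egr.
- by move=> x y Nx Ny; rewrite leq_min Nx Ny.
Qed.

Lemma KC_le_card_Egr n r s : r <= n -> KC F n r s <= #|Egr F n r|.
Proof. by move=> le_rn; apply/KC_le_card/covers_Egr. Qed.

Lemma KC_le_transfer m n k r s t (phi : 'M[F]_m -> 'M[F]_n) : k <= m ->
  {in Egr F m k, forall c, phi c \in Egr F n r} ->
  (forall U, U \in Egr F n r -> exists2 V, V \in Egr F m k &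
     {in Egr F m k, forall c, dinj V c <= s -> dinj U (phi c) <= t}) ->
  KC F n r t <= KC F m k s.
Proof.
move=> le_km phiE near_phi.
apply: KC_ge => // C /and3P[sCE nC /forall_inP covC].
apply: leq_trans (leq_imset_card phi C); apply: KC_le_card; apply/and3P; split.
- by apply/subsetP => _ /imsetP[c Cc ->]; apply/phiE/(subsetP sCE).
- by have [c Cc] := set0Pn _ nC; apply/set0Pn; exists (phi c); apply: imset_f.
apply/forall_inP => U EU; have [V EV nearV] := near_phi U EU.
have /exists_inP[c Cc dVc] := covC V EV.
apply/exists_inP; exists (phi c); first exact: imset_f.
exact/nearV/dVc/(subsetP sCE).
Qed.

Lemma KC_ambientS m r s : r <= m -> KC F m.+1 r s.+1 <= KC F m r s.
Proof.
move=> le_rm; pose E : 'M[F]_(m, m.+1) := pid_mx m.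
have freeE : row_free E by rewrite /row_free rank_pid_mx.
pose phi (c : 'M[F]_m) := <<(c *m E)%R>>%MS.
have Ephi c : c \in Egr F m r -> phi c \in Egr F m.+1 r.
  by move=> Ec; rewrite Egr_genmx mxrankMfree // (Egr_rank Ec).
apply: (KC_le_transfer le_rm Ephi) => U EU.
have [V EV dUV] := exists_Egr_near_image freeE (Egr_rank EU) le_rm.
exists V => // c Ec dVc; rewrite subSnn in dUV; rewrite -[s.+1]add1n.
apply: leq_trans (dinj_triangle (Egr_rank EU) (Egr_rank (Ephi V EV))
  (Egr_rank (Ephi c Ec))) _.
by rewrite leq_add // dinj_genmx_mulmx.
Qed.

Lemma KC_rankS n k s : k < n -> KC F n k.+1 s.+1 <= KC F n k s.
Proof.
move=> lt_kn.
pose ext (c : 'M[F]_n) :=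
  <<odflt c [pick B : 'M[F]_n | (c <= B)%MS && (\rank B == k.+1)]>>%MS.
have extP c : c \in Egr F n k -> (c <= ext c)%MS /\ \rank (ext c) = k.+1.
  move=> Ec; rewrite /ext; case: pickP => [B /andP[cB /eqP rB] | noB] /=.
    by rewrite genmxE mxrank_gen.
  have [|B cB rB] := exists_supmx_rank (A := c) (k := k.+1).
    by rewrite (Egr_rank Ec) leqnSn lt_kn.
  by have := noB B; rewrite cB rB eqxx.
have Eext c : c \in Egr F n k -> ext c \in Egr F n k.+1.
  by case/extP=> _; rewrite /ext Egr_genmx mxrank_gen => ->.
apply: (KC_le_transfer (ltnW lt_kn) Eext) => U EU.
have rU := Egr_rank EU.
have [|X XU rX] := exists_submx_rank (A := U) (p := k); first by rewrite rU.
exists <<X>>%MS; first by rewrite Egr_genmx rX.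
move=> c Ec; have [c_ext rext] := extP c Ec; have rc := Egr_rank Ec.
have rV : \rank <<X>>%MS = k by rewrite mxrank_gen.
rewrite (dinj_leE _ rV rc) (dinj_leE _ rU rext).
have VU : (<<X>> <= U)%MS by rewrite genmxE.
have := mxrank_adds_sub (ext c) VU.
have := mxrank_adds_sub <<X>>%MS c_ext.
rewrite rU rV rc rext addsmxC [(c + _)%MS]addsmxC; lia.
Qed.

Lemma KC_ambientD m r s j : r <= m -> KC F (m + j) r (s + j) <= KC F m r s.
Proof.
move=> le_rm; elim: j => [|j IHj]; first by rewrite !addn0.
rewrite !addnS; apply: leq_trans (KC_ambientS _ _) IHj.
exact: leq_trans le_rm (leq_addr j m).
Qed.

Lemma KC_rankD n k s j : k + j <= n -> KC F n (k + j) (s + j) <= KC F n k s.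
Proof.
elim: j => [|j IHj] le_kjn; first by rewrite !addn0.
rewrite addnS in le_kjn; rewrite !addnS.
exact: leq_trans (KC_rankS _ le_kjn) (IHj (ltnW le_kjn)).
Qed.

End CoveringNumber.

Section GrassmannianSize.
Variable F : finFieldType.
Local Notation q := #|F|.

Lemma card_submx_row_free k m (A : 'M[F]_(k, m)) : row_free A ->
  #|[set v : 'rV[F]_m | (v <= A)%MS]| = q ^ k.
Proof.
move=> freeA; have [B AB] := row_freeP freeA.
have -> : [set v : 'rV_m | (v <= A)%MS] = [set (u *m A)%R | u : 'rV_k].
  by apply/setP => v; rewrite inE; apply/submxP/imsetP => -[u]; exists u.
rewrite card_imset ?card_mx ?mul1n // => u u' /(congr1 (mulmxr B)) /=.
by rewrite -!mulmxA AB !mulmx1.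
Qed.

Lemma row_free_col_mx k m (v : 'rV[F]_m) (A : 'M[F]_(k, m)) :
  row_free (col_mx v A) = row_free A && ~~ (v <= A)%MS.
Proof.
rewrite /row_free -addsmxE.
have [leA eqA] := mxrank_leqif_sup (addsmxSr v A).
have le_vA : \rank (v + A)%MS <= (\rank A).+1.
  rewrite -[(\rank A).+1]add1n (leq_trans (mxrank_adds_leqif _ _)) //.
  by rewrite leq_add2r rank_leq_row.
rewrite addsmx_sub submx_refl andbT in eqA.
have leAk := rank_leq_row A.
rewrite add1n; apply/idP/andP => [/eqP rvA | [/eqP rA nvA]].
  split; first by rewrite eqn_leq leAk -ltnS -rvA le_vA.
  by rewrite -eqA rvA ltn_eqF // ltnS.
rewrite -eqA rA in nvA; rewrite rA in leA le_vA.
by rewrite eqn_leq le_vA ltn_neqAle nvA leA.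
Qed.

Lemma card_row_free k m : k <= m ->
  #|[set A : 'M[F]_(k, m) | row_free A]| = \prod_(i < k) (q ^ m - q ^ i).
Proof.
elim: k => [|k IHk] le_km.
  have -> : [set A : 'M[F]_(0, m) | row_free A] = setT.
    by apply/setP => A; rewrite !inE /row_free eqn_leq rank_leq_row.
  by rewrite cardsT card_mx big_ord0.
rewrite big_ord_recr /= -IHk; last exact: ltnW.
rewrite -sum_nat_cond_const -sum1dep_card.
rewrite (reindex (fun p : 'M_(k, m) * 'rV_m => col_mx p.2 p.1 : 'M_(k.+1, m))).
  under eq_bigl => p do rewrite row_free_col_mx.
  rewrite -(pair_big_dep (fun A => row_free A) (fun A v => ~~ (v <= A)%MS)
    (fun _ _ => 1)).
  apply: eq_bigr => A freeA; rewrite sum1dep_card.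
  have -> : [set v : 'rV_m | ~~ (v <= A)%MS] = ~: [set v | (v <= A)%MS].
    by apply/setP => v; rewrite !inE.
  by rewrite cardsCs setCK card_mx mul1n card_submx_row_free.
exists (fun M : 'M_(1 + k, m) => (dsubmx M, usubmx M)) => [[A v] | M] _ /=.
  by rewrite col_mxKd col_mxKu.
by rewrite vsubmxK.
Qed.

Lemma eqmx_pid_ebase m n k (U : 'M[F]_(m, n)) : \rank U = k ->
  (((pid_mx k : 'M_(k, n)) *m row_ebase U)%R :=: U)%MS.
Proof. by move=> <-; apply: eq_row_base. Qed.

Lemma row_free_pid_ebase m n k (U : 'M[F]_(m, n)) : \rank U = k ->
  row_free ((pid_mx k : 'M_(k, n)) *m row_ebase U)%R.
Proof. by move=> <-; apply: row_base_free. Qed.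

Lemma card_Egr_mul_le m k :
  #|Egr F m k| * #|[set g : 'M[F]_k | row_free g]|
    <= #|[set A : 'M[F]_(k, m) | row_free A]|.
Proof.
pose basis (U : 'M[F]_m) : 'M[F]_(k, m) := (pid_mx k *m row_ebase U)%R.
pose f (p : 'M[F]_m * 'M[F]_k) := (p.2 *m basis p.1)%R.
rewrite -cardsX -(card_in_imset (f := f)) => [|[U g] [U' g']]; last first.
  case/setXP=> EU; rewrite inE => free_g.
  case/setXP=> EU'; rewrite inE => free_g' eq_f.
  have rU := Egr_rank EU; have rU' := Egr_rank EU'.
  have eqUU' : (U :=: U')%MS.
    apply: eqmx_trans (eqmx_sym (eqmx_pid_ebase rU)) _.
    apply: eqmx_trans (eqmx_sym (eqmxMfull _ free_g)) _.
    rewrite [(g *m _)%R]eq_f.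
    exact: eqmx_trans (eqmxMfull _ free_g') (eqmx_pid_ebase rU').
  have eq_U : U = U'.
    move: EU EU'; rewrite !inE => /andP[/eqP <- _] /andP[/eqP <- _].
    exact/eq_genmx.
  subst U'; have [B basisB] := row_freeP (row_free_pid_ebase rU).
  move/(congr1 (mulmxr B)): eq_f; rewrite /f /basis /= -!mulmxA.
  by rewrite !(mulmxA (pid_mx k)) basisB !mulmx1 => ->.
apply: subset_leq_card; apply/subsetP => x /imsetP[[U g] /setXP[EU]].
rewrite !inE => free_g -> /=.
by rewrite /row_free /f /= mxrankMfree ?row_free_pid_ebase ?(Egr_rank EU).
Qed.

Lemma card_Egr_le_gauss_binom m k : k <= m ->
  (#|Egr F m k|%:R <= gauss_binom q m k :> rat)%R.
Proof.
move=> le_km; have q_gt1 : 1 < q.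
  by apply/card_gt1P; exists 0%R, 1%R; rewrite eq_sym oner_neq0.
have lt_q i j : i < j -> q ^ i < q ^ j by move=> lt_ij; rewrite ltn_exp2l.
have -> : gauss_binom q m k = ((\prod_(i < k) (q ^ m - q ^ i))%:R
                               / (\prod_(i < k) (q ^ k - q ^ i))%:R)%R.
  rewrite /gauss_binom !natr_prod -prodf_div; apply: eq_bigr => i _.
  by rewrite !natrB // ltnW // lt_q // (leq_trans (ltn_ord i)).
rewrite ler_pdivlMr; last first.
  by rewrite ltr0n prodn_gt0 // => i; rewrite subn_gt0 lt_q.
rewrite -natrM ler_nat -(card_row_free (leqnn k)) -card_row_free //.
exact: card_Egr_mul_le.
Qed.

Lemma KC_le_gauss_binom n r s : r <= n ->
  ((KC F n r s)%:R <= gauss_binom q n r :> rat)%R.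
Proof.
move=> le_rn; apply: le_trans (card_Egr_le_gauss_binom le_rn).
by rewrite ler_nat KC_le_card_Egr.
Qed.

End GrassmannianSize.

Theorem lemma8 (F : finFieldType) (n r rho : nat) :
  (r <= n./2)%N -> (0 < rho)%N -> (rho < r)%N ->
  [/\ (KC F n r rho <= KC F n.-1 r rho.-1)%N,
      ((KC F n.-1 r rho.-1)%:R <= gauss_binom #|F| (n - rho) r :> rat)%R,
      (KC F n r rho <= KC F n r.-1 rho.-1)%N
    & ((KC F n r.-1 rho.-1)%:R <= gauss_binom #|F| n (r - rho) :> rat)%R].
Proof.
move=> le_r_half; case: rho => // s _.
case: r le_r_half => // r le_r_half lt_sr.
have le_2r_n : r.+1.*2 <= n by rewrite -geq_half_double.
case: n le_r_half le_2r_n => [|n] _ le_2r_n; first by [].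
rewrite /= !subSS; have le_rn : r.+1 <= n by lia.
have le_rsn : r.+1 <= n - s by lia.
split.
- exact (KC_ambientS F s le_rn).
- apply: le_trans (KC_le_gauss_binom F 0 le_rsn); rewrite ler_nat.
  have le_s_n : s <= n by lia.
  by have := KC_ambientD F 0 s le_rsn; rewrite add0n subnK.
- exact (@KC_rankS F n.+1 r s (ltnW le_rn)).
- have le_rs_n : r - s <= n.+1 by lia.
  apply: le_trans (KC_le_gauss_binom F 0 le_rs_n); rewrite ler_nat.
  have le_r_n : r - s + s <= n.+1 by lia.
  have le_sr : s <= r by lia.
  by have := KC_rankD F 0 le_r_n; rewrite add0n subnK.
Qed.
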